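(* Let $S$ be a finite set of at least two points in $\mathbb R^2$, let $\square$ be a minimal bounding square of $S$, and let $\mathrm{lfs}(x,y)$ denote the Euclidean distance from $(x,y)$ to the second nearest point of $S$. Then for the quadtree clustering of $S$ described below, the sum over its clusters of the perimeters of their convex hulls is at most $c\int_{\square} \frac{1}{\mathrm{lfs}(x,y)}\,dx\,dy$, for an absolute constant $c$.
   Context: Quadtree: starting from the root square $\square$, repeatedly split any square containing more than one point of $S$ into four equal quadrants; a point on the boundary of a square is considered outside it if it lies on the lower or right side and inside otherwise, so each square is the disjoint union of its quadrants. The compressed quadtree consists of those quadtree squares that contain points of $S$ in more than one of their quadrants (plus the root); each non-root square's parent is the smallest larger compressed-quadtree square containing it, and each point's parent is the smallest square containing it, giving a tree in which each square has between two and four children, at most one per quadrant. The quadtree clustering has a cluster for the set of points in each compressed-quadtree square; additionally, for a square with three children, a cluster combining the points of two of its children whose quadrants share a side, and for a square with four children, two clusters each combining the points of a pair of children in side-adjacent quadrants. Together with singletons this is a hierarchical clustering. *)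

From HB Require Import structures.
From mathcomp Require Import all_boot all_order all_algebra.
From mathcomp Require Import all_classical all_reals all_analysis.
Set Implicit Arguments. Unset Strict Implicit. Unset Printing Implicit Defensive.
Import Order.TTheory GRing.Theory Num.Theory.
Local Open Scope ring_scope.

Section QuadtreeDefs.
Variable R : realType.
Implicit Types (z w u : R * R).

Definition dist z w : R := Num.sqrt ((z.1 - w.1) ^+ 2 + (z.2 - w.2) ^+ 2).
Definition dotp z w : R := z.1 * w.1 + z.2 * w.2.
(* cross product of (b - a) and (c - a): >= 0 iff c is weakly left of a->b *)
Definition orient (a b c : R * R) : R :=
  (b.1 - a.1) * (c.2 - a.2) - (b.2 - a.2) * (c.1 - a.1).

Definition is_hull_vertex (P : seq (R * R)) v : Prop :=
  v \in P /\ exists u, forall w, w \in P -> w != v -> dotp u w < dotp u v.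

(* s lists the hull vertices of P in counterclockwise cyclic order *)
Definition hull_cycle (P : seq (R * R)) (s : seq (R * R)) : Prop :=
  [/\ uniq s, (forall v, v \in s <-> is_hull_vertex P v) &
      forall e, e \in zip s (rot 1 s) -> forall w, w \in P -> 0 <= orient e.1 e.2 w].

Definition cycle_length (s : seq (R * R)) : R :=
  \sum_(e <- zip s (rot 1 s)) dist e.1 e.2.

(* perimeter of the convex hull of P (length of the hull boundary polygon;
   for collinear sets this is twice the segment length, for a point 0) *)
Definition hull_perimeter (P : seq (R * R)) : R :=
  sup [set l | exists s, hull_cycle P s /\ l = cycle_length s].

Variable n : nat.
Variable p : 'I_n -> R * R.

Definition lfs z : R := nth 0 (sort <=%O [seq dist z (p a) | a <- enum 'I_n]) 1.

Definition bounding_square (x0 y0 L : R) : Prop :=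
  forall a, x0 <= (p a).1 <= x0 + L /\ y0 <= (p a).2 <= y0 + L.

Definition min_bounding_square (x0 y0 L : R) : Prop :=
  bounding_square x0 y0 L /\
  forall x1 y1 L', bounding_square x1 y1 L' -> L <= L'.

Variables (x0 y0 L : R).

(* Quadtree cells at depth k are indexed by (i, j), 0 <= i, j < 2^k; cell
   (i,j) is [x0 + i L/2^k, x0 + (i+1) L/2^k) x (y0 + j L/2^k, y0 + (j+1) L/2^k]
   (lower and right sides excluded), except that sides lying on the root's
   boundary are included (so the root contains all of S). *)
Definition cellx (k : nat) (x : R) : int :=
  Order.min (Num.floor ((x - x0) / L * 2 ^+ k)) (2 ^ k - 1)%:Z.
Definition celly (k : nat) (y : R) : int :=
  Order.max (Num.ceil ((y - y0) / L * 2 ^+ k) - 1) 0.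

Definition cell_pts (k : nat) (i j : int) : {set 'I_n} :=
  [set a | (cellx k (p a).1 == i) && (celly k (p a).2 == j)].

(* points of S in quadrant q = (right?, top?) of cell (k, i, j) *)
Definition quad_pts (k : nat) (i j : int) (q : bool * bool) : {set 'I_n} :=
  cell_pts k.+1 (i * 2 + (q.1 : nat)%:Z) (j * 2 + (q.2 : nat)%:Z).

(* number of quadrants of the cell containing points of S
   (= number of children in the compressed quadtree) *)
Definition nquad (k : nat) (i j : int) : nat :=
  #|[set q : bool * bool | (0 < #|quad_pts k i j q|)%N]|.

Definition compressed_square (k : nat) (i j : int) : Prop :=
  (k = 0%N /\ i = 0 /\ j = 0) \/ (1 < nquad k i j)%N.

(* A choice [d] of the extra pair clusters: for a square with three or four
   children, d k i j = true pairs the side-adjacent quadrants lying in the same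
   row, false pairs those in the same column.  With three children this selects
   exactly one of the two possible side-adjacent pairs, with four children it
   selects two complementary pairs. *)
Definition is_cluster (d : nat -> int -> int -> bool) (A : {set 'I_n}) : Prop :=
  (exists k i j, compressed_square k i j /\ A = cell_pts k i j) \/
  (exists k i j, compressed_square k i j /\ (3 <= nquad k i j)%N /\
     exists q1 q2 : bool * bool,
       [/\ (if d k i j then q1.2 = q2.2 /\ q1.1 <> q2.1
                      else q1.1 = q2.1 /\ q1.2 <> q2.2),
           (0 < #|quad_pts k i j q1|)%N, (0 < #|quad_pts k i j q2|)%N &
           A = quad_pts k i j q1 :|: quad_pts k i j q2]).

End QuadtreeDefs.

Definition closed_square (R : realType) (x0 y0 L : R) : set (R * R) :=
  [set z | x0 <= z.1 <= x0 + L /\ y0 <= z.2 <= y0 + L].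

From HB Require Import structures.
From mathcomp Require Import all_boot all_order all_algebra.
From mathcomp Require Import all_classical all_reals all_analysis.
From mathcomp Require Import zify ring lra.
Import Order.TTheory GRing.Theory Num.Theory.
Local Open Scope ring_scope.
Set Implicit Arguments. Unset Strict Implicit. Unset Printing Implicit Defensive.

(* Every cluster lies in the closure of a quadtree square Q that contains two
   distinct points of S, and each such Q carries at most 17 clusters.  A convex
   polygon inside a square of side s has perimeter at most 4s: its rightward edges
   have disjoint x-projections, so the total horizontal variation is at most 2s,
   and likewise vertically.  Hence the sum of the perimeters is at most 68 times
   the sum of the sides of these squares.  Conversely, a point z of such a square
   Q has two points of S within distance 2 side(Q), so side(Q) >= lfs(z)/2; since
   z lies in at most four squares of each level, summing 1/(16 side(Q)) over the
   squares containing z is a geometric sum bounded by 1/lfs(z).  Integrating over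
   the root square bounds the sum of the sides by 16 times the integral of 1/lfs,
   so c = 68 * 16 works. *)

Section SecondSmallest.
Variables (disp : Order.disp_t) (T : orderType disp) (dflt : T).
Implicit Types (s : seq T) (v : T).

Lemma nth1_sort_le s v :
  (1 < count (<= v)%O s)%N -> (nth dflt (sort <=%O s) 1 <= v)%O.
Proof.
rewrite -(permP (permEl (perm_sort <=%O s))); have := sort_le_sorted s.
case: (sort <=%O s) => [|y0 [|y1 r]] //=; first by case: (y0 <= v)%O.
case/andP=> _ path_r cnt; rewrite leNgt; apply/negP => v_lt_y1; move: cnt.
have /allP r_ge_y1 := order_path_min (@le_trans _ T) path_r.
have -> : count (<= v)%O r = 0%N.
  apply/eqP; rewrite -leqn0 leqNgt -has_count; apply/hasPn => y /r_ge_y1 y1y.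
  by rewrite -ltNge (lt_le_trans v_lt_y1 y1y).
by rewrite [(y1 <= v)%O]leNgt v_lt_y1 addn0; case: (y0 <= v)%O.
Qed.

Lemma nth1_sort_gt s v : (1 < size s)%N ->
  (count (<= v)%O s <= 1)%N -> (v < nth dflt (sort <=%O s) 1)%O.
Proof.
rewrite -(permP (permEl (perm_sort <=%O s))) -(size_sort <=%O); have := sort_le_sorted s.
case: (sort <=%O s) => [|y0 [|y1 r]] //= /andP[y01 _] _.
by rewrite ltNge; apply: contraTN => y1v; rewrite y1v (le_trans y01 y1v).
Qed.

End SecondSmallest.

Lemma count_enum (T : finType) (P : pred T) : count P (enum T) = #|P|.
Proof.
by rewrite cardE /enum_mem size_filter count_filter; apply: eq_count => x; rewrite /= andbT.
Qed.

Section Distance.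
Variable R : realType.
Implicit Types z w : R * R.

Lemma dist_ge0 z w : 0 <= dist z w.
Proof. exact: sqrtr_ge0. Qed.

Lemma dist_le_sum_abs z w : dist z w <= `|z.1 - w.1| + `|z.2 - w.2|.
Proof.
rewrite /dist -[leRHS]ger0_norm ?addr_ge0 // -sqrtr_sqr ler_wsqrtr //.
rewrite [leRHS]sqrrD !real_normK ?num_real // [leRHS]addrAC.
by rewrite lerDl mulrn_wge0 ?mulr_ge0.
Qed.

Lemma dist_le0_eq z w : dist z w <= 0 -> z = w.
Proof.
move=> zw_le0; have : dist z w == 0 by rewrite eq_le zw_le0 dist_ge0.
rewrite sqrtr_eq0 le_eqVlt ltNge addr_ge0 ?sqr_ge0 // orbF paddr_eq0 ?sqr_ge0 //.
rewrite !sqrf_eq0 !subr_eq0 => /andP[/eqP e1 /eqP e2].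
by case: z w e1 e2 {zw_le0} => [? ?] [? ?] /= -> ->.
Qed.

Variables (n : nat) (p : 'I_n -> R * R).

Lemma lfs_le z a b (v : R) : a != b ->
  dist z (p a) <= v -> dist z (p b) <= v -> lfs p z <= v.
Proof.
move=> ab za zb; apply: nth1_sort_le; rewrite count_map count_enum.
by apply/card_gt1P; exists a, b; rewrite !inE za zb.
Qed.

Lemma lfs_gt0 z : injective p -> (1 < n)%N -> 0 < lfs p z.
Proof.
move=> p_inj n_gt1; apply: nth1_sort_gt; first by rewrite size_map size_enum_ord.
rewrite count_map count_enum.
apply/card_le1_eqP => a b; rewrite !inE => /dist_le0_eq za /dist_le0_eq zb.
by apply: p_inj; rewrite -za -zb.
Qed.

End Distance.

Lemma sum_disjoint_intervals_le (R : realDomainType) (T : eqType)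
    (lo hi : T -> R) (E : seq T) (X Y : R) :
  uniq E -> X <= Y ->
  (forall e, e \in E -> [/\ X <= lo e, lo e <= hi e & hi e <= Y]) ->
  (forall e f, e \in E -> f \in E -> e != f -> hi e <= lo f \/ hi f <= lo e) ->
  \sum_(e <- E) (hi e - lo e) <= Y - X.
Proof.
have [N] := ubnP (size E); elim: N E X Y => // N IH [|e E] X Y /= E_le.
  by move=> _ XY _ _; rewrite big_nil subr_ge0.
case/andP=> eE uE XY E_in E_disj; rewrite big_cons (bigID (fun f => hi f <= lo e)) /=.
have [Xe ee eY] := E_in e (mem_head _ _).
have E_sub f : f \in E -> f \in e :: E by move=> fE; rewrite in_cons fE orbT.
have left_part : \sum_(f <- E | hi f <= lo e) (hi f - lo f) <= lo e - X.
  rewrite -big_filter; apply: IH => [|||f|f g]; rewrite ?filter_uniq ?mem_filter //.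
  - by rewrite size_filter (leq_ltn_trans (count_size _ _)).
  - by case/andP=> fe /E_sub /E_in[Xf ff _]; split.
  - by case/andP=> _ /E_sub fE /andP[_ /E_sub gE]; apply: E_disj.
have right_part : \sum_(f <- E | ~~ (hi f <= lo e)) (hi f - lo f) <= Y - hi e.
  rewrite -big_filter; apply: IH => [|||f|f g]; rewrite ?filter_uniq ?mem_filter //.
  - by rewrite size_filter (leq_ltn_trans (count_size _ _)).
  - case/andP=> f_right fE; have ef : e != f by apply: contraNneq eE => ->.
    have [Xf ff fY] := E_in f (E_sub f fE); split => //.
    by case: (E_disj e f (mem_head _ _) (E_sub f fE) ef) => // fe; rewrite fe in f_right.
  - by case/andP=> _ /E_sub fE /andP[_ /E_sub gE]; apply: E_disj.
lra.
Qed.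

Section CyclicEdges.
Variable T : eqType.
Implicit Types s : seq T.

Lemma mem_zip_rot1 s e : e \in zip s (rot 1 s) -> e.1 \in s /\ e.2 \in s.
Proof.
move=> se; split.
  by rewrite -[s in _ \in s](@unzip1_zip _ _ s (rot 1 s)) ?size_rot ?map_f.
by rewrite -(mem_rot 1) -[rot 1 s](@unzip2_zip _ _ s) ?size_rot ?map_f.
Qed.

Lemma uniq_zip_rot1 s : uniq s -> uniq (zip s (rot 1 s)).
Proof. by move=> us; apply: (@map_uniq _ _ fst); rewrite -/(unzip1 _) unzip1_zip ?size_rot. Qed.

Lemma sum_zip_rot1_sub (V : zmodType) (f : T -> V) s :
  \sum_(e <- zip s (rot 1 s)) (f e.2 - f e.1) = 0.
Proof.
rewrite sumrB -(big_map snd xpredT) -(big_map fst xpredT) -/(unzip1 _) -/(unzip2 _).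
by rewrite unzip1_zip ?unzip2_zip ?size_rot // (perm_big _ (permEl (perm_rot 1 s))) subrr.
Qed.

Lemma zip_map2 (U : Type) (f : T -> U) s t :
  zip (map f s) (map f t) = map (fun e => (f e.1, f e.2)) (zip s t).
Proof. by elim: s t => [|x s IH] [|y t] //=; rewrite IH. Qed.

End CyclicEdges.

Section HullPerimeter.
Variable R : realType.
Implicit Types (a b c d u v w : R * R) (P s : seq (R * R)).

Definition supporting_edge P a b : Prop :=
  [/\ is_hull_vertex P a, is_hull_vertex P b & forall w, w \in P -> 0 <= orient a b w].

Lemma hull_vertex_not_between P a b v : a \in P -> b \in P ->
  a.1 < v.1 < b.1 -> orient a b v = 0 -> ~ is_hull_vertex P v.
Proof.
move=> Pa Pb /andP[av vb] abv0 [_ [u u_max]].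
have ua : dotp u a < dotp u v by apply: u_max Pa _; apply: contraTneq av => ->; rewrite ltxx.
have ub : dotp u b < dotp u v by apply: u_max Pb _; apply: contraTneq vb => ->; rewrite ltxx.
have barycenter : (b.1 - a.1) * dotp u v
    = (b.1 - v.1) * dotp u a + (v.1 - a.1) * dotp u b + u.2 * orient a b v.
  by rewrite /dotp /orient; ring.
rewrite abv0 mulr0 addr0 in barycenter.
have : (b.1 - v.1) * dotp u a < (b.1 - v.1) * dotp u v by rewrite ltr_pM2l ?subr_gt0.
have : (v.1 - a.1) * dotp u b < (v.1 - a.1) * dotp u v by rewrite ltr_pM2l ?subr_gt0.
lra.
Qed.

Lemma collinear_same_x_eq a b c : a.1 != b.1 ->
  orient a b c = 0 -> c.1 = a.1 -> c = a.
Proof.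
move=> ab abc0 ca; move: abc0; rewrite /orient ca subrr mulr0 subr0 => /eqP.
rewrite mulf_eq0 subr_eq0 eq_sym (negPf ab) subr_eq0 /= => /eqP.
by case: a c ca {ab} => [? ?] [? ?] /= -> ->.
Qed.

Lemma supporting_edges_x_disjoint P a b c d :
  supporting_edge P a b -> supporting_edge P c d ->
  a.1 < b.1 -> c.1 < d.1 -> (a, b) != (c, d) -> b.1 <= c.1 \/ d.1 <= a.1.
Proof.
wlog ac : a b c d / a.1 <= c.1.
  move=> wlog_ac sab scd ab cd neq; case: (lerP a.1 c.1) => [ac|ca].
    exact: wlog_ac.
  by apply/or_comm/wlog_ac; rewrite 1?eq_sym ?ltW.
move=> [va vb ab_supp] [vc vd cd_supp] ab cd neq; left; rewrite leNgt.
apply/negP => cb.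
have abc0 : orient a b c = 0.
  have : (b.1 - c.1) * orient c d a + (c.1 - a.1) * orient c d b
         = - ((d.1 - c.1) * orient a b c) by rewrite /orient; ring.
  have := cd_supp a va.1; have := cd_supp b vb.1; have := ab_supp c vc.1.
  by nra.
have ca : c = a.
  case: (ltrP a.1 c.1) => [lt_ac|le_ca].
    by case: (hull_vertex_not_between va.1 vb.1 _ abc0 vc); rewrite lt_ac.
  by apply: collinear_same_x_eq abc0 _; rewrite ?lt_eqF //; apply/le_anti/andP.
subst c.
have abd0 : orient a b d = 0.
  have : orient a d b = - orient a b d by rewrite /orient; ring.
  by have := ab_supp d vd.1; have := cd_supp b vb.1; lra.
case: (ltrgtP d.1 b.1) => [lt_db|lt_bd|eq_db].
- by case: (hull_vertex_not_between va.1 vb.1 _ abd0 vd); rewrite cd.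
- have adb0 : orient a d b = 0 by move: abd0; rewrite /orient; lra.
  by case: (hull_vertex_not_between va.1 vd.1 _ adb0 vb); rewrite ab.
- have bad0 : orient b a d = 0 by move: abd0; rewrite /orient; lra.
  have db : d = b by apply: collinear_same_x_eq bad0 eq_db; rewrite gt_eqF.
  by move: neq; rewrite db eqxx.
Qed.

Lemma sum_abs_dx_le P s (X sg : R) : 0 <= sg -> uniq s ->
  (forall v, v \in s -> is_hull_vertex P v) ->
  (forall e, e \in zip s (rot 1 s) -> forall w, w \in P -> 0 <= orient e.1 e.2 w) ->
  (forall w, w \in P -> X <= w.1 <= X + sg) ->
  \sum_(e <- zip s (rot 1 s)) `|e.2.1 - e.1.1| <= 2 * sg.
Proof.
move=> sg0 us s_hull s_supp P_strip.
have edge_supp e : e \in zip s (rot 1 s) -> supporting_edge P e.1 e.2.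
  by move=> es; have [/s_hull e1 /s_hull e2] := mem_zip_rot1 es; split => //; apply: s_supp.
(* |dx| = 2 max(dx, 0) - dx, and the dx telescope to 0 around the cycle; the
   rightward edges lie on the lower hull, so their x-projections do not overlap. *)
have normE (x : R) : `|x| = 2 * (if 0 < x then x else 0) - x.
  by case: ltrP => x_sign; [rewrite gtr0_norm // | rewrite ler0_norm //]; ring.
under eq_bigr do rewrite normE.
rewrite sumrB (sum_zip_rot1_sub (fun z => z.1)) subr0 -mulr_sumr ler_pM2l //.
rewrite -big_mkcond -big_filter /= -[leRHS](addrK X sg) [sg + X]addrC.
apply: sum_disjoint_intervals_le; rewrite ?filter_uniq ?uniq_zip_rot1 ?lerDl //.
- move=> e; rewrite mem_filter => /andP[dx_gt0 /mem_zip_rot1[]].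
  move=> /s_hull[/P_strip/andP[? ?] _] /s_hull[/P_strip/andP[? ?] _].
  by split => //; lra.
- move=> e f; rewrite !mem_filter => /andP[e_gt0 /edge_supp e_supp].
  move=> /andP[f_gt0 /edge_supp f_supp] ef.
  by apply: supporting_edges_x_disjoint e_supp f_supp _ _ _;
    rewrite -1?subr_gt0 // -!surjective_pairing.
Qed.

Definition rot90 v : R * R := (- v.2, v.1).

Lemma rot90_inj : injective rot90.
Proof. by move=> [x y] [x' y'] [/eqP]; rewrite eqr_opp => /eqP -> ->. Qed.

Lemma orient_rot90 a b c : orient (rot90 a) (rot90 b) (rot90 c) = orient a b c.
Proof. by rewrite /orient /=; ring. Qed.

Lemma hull_vertex_rot90 P v :
  is_hull_vertex P v -> is_hull_vertex (map rot90 P) (rot90 v).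
Proof.
case=> Pv [u u_max]; split; first exact: map_f.
exists (rot90 u) => _ /mapP[w Pw ->] wv.
have dotp_rot90 z : dotp (rot90 u) (rot90 z) = dotp u z by rewrite /dotp /=; ring.
by rewrite !dotp_rot90 u_max //; apply: contraNneq wv => ->.
Qed.

Lemma cycle_length_le P s (X Y sg : R) : 0 <= sg -> hull_cycle P s ->
  (forall w, w \in P -> closed_square X Y sg w) -> cycle_length s <= 4 * sg.
Proof.
move=> sg0 [us s_hull s_supp] P_sq.
have s_hull' v : v \in s -> is_hull_vertex P v by move/s_hull.
have sum_dx := sum_abs_dx_le sg0 us s_hull' s_supp (fun w Pw => (P_sq w Pw).1).
have sum_dy : \sum_(e <- zip s (rot 1 s)) `|e.2.2 - e.1.2| <= 2 * sg.
  have rs_hull v : v \in map rot90 s -> is_hull_vertex (map rot90 P) v.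
    by case/mapP=> v' /s_hull' /hull_vertex_rot90 vP ->.
  have rs_supp : forall e, e \in zip (map rot90 s) (rot 1 (map rot90 s)) ->
      forall w, w \in map rot90 P -> 0 <= orient e.1 e.2 w.
    rewrite -map_rot zip_map2 => _ /mapP[e es ->] _ /mapP[w Pw ->].
    by rewrite orient_rot90 s_supp.
  have rP_strip w : w \in map rot90 P -> - (Y + sg) <= w.1 <= - (Y + sg) + sg.
    by case/mapP=> w' /P_sq[_ /andP[? ?]] -> /=; apply/andP; split; lra.
  have := sum_abs_dx_le sg0 _ rs_hull rs_supp rP_strip.
  rewrite map_inj_uniq ?us; last exact: rot90_inj.
  rewrite -map_rot zip_map2 big_map /= => /(_ isT).
  by under eq_bigr do rewrite -opprD normrN.
rewrite /cycle_length (le_trans (ler_sum _ (fun e _ => dist_le_sum_abs e.1 e.2))) //.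
rewrite big_split /=.
under eq_bigr do rewrite distrC.
under [X in _ + X <= _]eq_bigr do rewrite distrC.
lra.
Qed.

Lemma hull_perimeter_le P (X Y sg : R) : 0 <= sg ->
  (forall w, w \in P -> closed_square X Y sg w) -> hull_perimeter P <= 4 * sg.
Proof.
move=> sg0 P_sq; rewrite /hull_perimeter; set S := (X in sup X).
have [[l Sl]|no_cycle] := pselect (S !=set0)%classic.
  by apply: ge_sup; [exists l | move=> _ [s [Ps ->]]; apply: cycle_length_le Ps P_sq].
rewrite (_ : S = set0) ?sup0 ?mulr_ge0 //.
by apply/seteqP; split=> // l Sl; apply: no_cycle; exists l.
Qed.

Lemma hull_perimeter_ge0 P : 0 <= hull_perimeter P.
Proof.
rewrite /hull_perimeter; set S := (X in sup X).
have [S_sup|/sup_out S0] := pselect (has_sup S); last by rewrite S0.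
have [l Sl] := S_sup.1; apply: le_trans (sup_upper_bound S_sup Sl).
by case: Sl => s [_ ->]; apply: sumr_ge0 => e _; apply: dist_ge0.
Qed.

End HullPerimeter.

Section ClampedRounding.
Variable R : archiRealDomainType.
Variables (t : R) (N : nat).
Hypotheses (N_gt0 : (0 < N)%N) (t_range : 0 <= t <= N%:R).

Lemma clamped_floor_bounds (i := Order.min (Num.floor t) (N - 1)%:Z) :
  [/\ 0 <= i, i < N%:Z & i%:~R <= t <= i%:~R + 1].
Proof.
have [t0 tN] := andP t_range; have fl_t := floor_le t.
have t_fl := floorD1_gt t; rewrite intrD mulr1z in t_fl.
rewrite /i; case: (leP (Num.floor t) (N - 1)%:Z) => [fl_N|N_fl].
  by split; [rewrite floor_ge0 | lia | rewrite fl_t ltW].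
have eN : ((N - 1)%:Z%:~R + 1 : R) = N%:R.
  by rewrite -[(N - 1)%:Z%:~R]/((N - 1)%:R) natrB // subrK.
split; rewrite ?eN ?tN ?andbT //; first lia.
by apply: le_trans fl_t; rewrite ler_int ltW.
Qed.

Lemma clamped_ceil_bounds (j := Order.max (Num.ceil t - 1) 0) :
  [/\ 0 <= j, j < N%:Z & j%:~R <= t <= j%:~R + 1].
Proof.
have [t0 tN] := andP t_range; have t_ce := ceil_ge t; have ce_t := ceilB1_lt t.
have ceN : Num.ceil t <= N%:Z by rewrite ceil_le_int.
rewrite /j; case: (leP 0 (Num.ceil t - 1)) => [ce_pos|ce_neg].
  split => //; first lia.
  by rewrite intrB mulr1z in ce_t *; apply/andP; split; lra.
have : Num.ceil t <= 0 by lia.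
by rewrite ceil_le0 => t_le0; split => //=; apply/andP; split; lra.
Qed.

End ClampedRounding.

(* None stands for the points of a square, Some (q1, q2) for the points in its
   quadrants q1 and q2; every cluster attached to the square is of one of these 17 forms. *)
Notation cluster_shape := (option ((bool * bool) * (bool * bool))).

Section Cells.
Variables (R : realType) (n : nat) (p : 'I_n -> R * R) (x0 y0 L : R).

Definition cell_side k : R := L / 2 ^+ k.

Definition cell_square k (i j : int) : set (R * R) :=
  closed_square (x0 + i%:~R * cell_side k) (y0 + j%:~R * cell_side k) (cell_side k).

Definition two_point_cell k (i j : int) : Prop :=
  [/\ 0 <= i < (2 ^ k)%N%:Z, 0 <= j < (2 ^ k)%N%:Z &
      exists a b, [/\ a != b, cell_square k i j (p a) & cell_square k i j (p b)]].

Definition cell_cluster k (i j : int) (o : cluster_shape) : {set 'I_n} :=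
  if o is Some (q1, q2) then quad_pts p x0 y0 L k i j q1 :|: quad_pts p x0 y0 L k i j q2
  else cell_pts p x0 y0 L k i j.

Lemma bounding_side_gt0 : (1 < n)%N -> injective p -> bounding_square p x0 y0 L -> 0 < L.
Proof.
move=> n_gt1 p_inj bsq; rewrite ltNge; apply/negP => L_le0.
have p_corner a : p a = (x0, y0).
  have [/andP[? ?] /andP[? ?]] := bsq a.
  by rewrite [p a]surjective_pairing; congr pair; lra.
have := p_inj (Ordinal (ltnW n_gt1)) (Ordinal n_gt1).
by rewrite !p_corner => /(_ erefl) /(congr1 val).
Qed.

Hypothesis L_gt0 : 0 < L.

Lemma cell_side_gt0 k : 0 < cell_side k.
Proof. by rewrite divr_gt0 ?exprn_gt0. Qed.

Lemma cell_sideS k : cell_side k.+1 = cell_side k / 2.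
Proof. by rewrite /cell_side exprS invfM; field. Qed.

Lemma cell_square_child k i j (q : bool * bool) :
  (cell_square k.+1 (i * 2 + (q.1 : nat)%:Z) (j * 2 + (q.2 : nat)%:Z)
   `<=` cell_square k i j)%classic.
Proof.
move=> z; rewrite /cell_square /closed_square cell_sideS /=.
have s_gt0 := cell_side_gt0 k; rewrite !intrD !intrM.
case: q => [[] []] /= [/andP[? ?] /andP[? ?]]; split; apply/andP; split; nra.
Qed.

Hypothesis bsq : bounding_square p x0 y0 L.

Lemma scaled_coord_range (c x : R) k : c <= x <= c + L ->
  0 <= (x - c) / L * 2 ^+ k <= (2 ^ k)%N%:R.
Proof.
move=> /andP[cx xc]; have pow_gt0 : 0 < (2 ^+ k : R) by rewrite exprn_gt0.
apply/andP; split; first by rewrite mulr_ge0 ?divr_ge0 ?subr_ge0 // ltW.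
by rewrite natrX -[leRHS]mul1r ler_pM2r // ler_pdivrMr // mul1r lerBlDl.
Qed.

Lemma scaled_coord_cell (c x : R) k (i : int) :
  i%:~R <= (x - c) / L * 2 ^+ k <= i%:~R + 1 ->
  c + i%:~R * cell_side k <= x <= c + i%:~R * cell_side k + cell_side k.
Proof.
have s_gt0 := cell_side_gt0 k.
have scaleE : (x - c) / L * 2 ^+ k * cell_side k = x - c.
  by rewrite /cell_side; field; rewrite expf_neq0 ?lt0r_neq0.
move=> /andP[lo hi]; rewrite -(ler_pM2r s_gt0) scaleE in lo.
rewrite -(ler_pM2r s_gt0) scaleE mulrDl mul1r in hi.
by apply/andP; split; lra.
Qed.

Lemma mem_cell_pts k i j a : a \in cell_pts p x0 y0 L k i j ->
  [/\ 0 <= i < (2 ^ k)%N%:Z, 0 <= j < (2 ^ k)%N%:Z & cell_square k i j (p a)].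
Proof.
rewrite inE => /andP[/eqP <- /eqP <-]; have [ax ay] := bsq a.
have x_range := scaled_coord_range k ax; have y_range := scaled_coord_range k ay.
have pow_gt0 : (0 < 2 ^ k)%N by rewrite expn_gt0.
have [i0 iN i_t] := clamped_floor_bounds pow_gt0 x_range.
have [j0 jN j_t] := clamped_ceil_bounds pow_gt0 y_range.
by split; rewrite ?i0 ?j0 //; split; apply: scaled_coord_cell.
Qed.

Lemma mem_quad_pts k i j q a : a \in quad_pts p x0 y0 L k i j q ->
  [/\ 0 <= i < (2 ^ k)%N%:Z, 0 <= j < (2 ^ k)%N%:Z & cell_square k i j (p a)].
Proof.
case/mem_cell_pts => /andP[i0 iN] /andP[j0 jN] /cell_square_child a_sq.
by rewrite expnS in iN jN; split => //; apply/andP; split; lia.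
Qed.

Lemma mem_cell_cluster k i j o a : a \in cell_cluster k i j o ->
  [/\ 0 <= i < (2 ^ k)%N%:Z, 0 <= j < (2 ^ k)%N%:Z & cell_square k i j (p a)].
Proof.
case: o => [[q1 q2]|]; last exact: mem_cell_pts.
by rewrite inE => /orP[]; apply: mem_quad_pts.
Qed.

Lemma mem_quad_pts_eq k i j q1 q2 a : a \in quad_pts p x0 y0 L k i j q1 ->
  a \in quad_pts p x0 y0 L k i j q2 -> q1 = q2.
Proof.
rewrite !inE => /andP[/eqP-> /eqP->] /andP[/eqP ex /eqP ey].
by case: q1 q2 ex ey => [[] []] [[] []] //=; lia.
Qed.

Lemma compressed_two_point_cell k i j : (1 < n)%N ->
  compressed_square p x0 y0 L k i j -> two_point_cell k i j.
Proof.
move=> n_gt1 [[-> [-> ->]] | /card_gt1P[q1 [q2 [q1_occ q2_occ q12]]]].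
  have root_sq a : cell_square 0 0 0 (p a).
    by rewrite /cell_square /cell_side expr0 divr1 mul0r !addr0; apply: bsq.
  by split=> //; exists (Ordinal (ltnW n_gt1)), (Ordinal n_gt1); split.
rewrite !inE in q1_occ q2_occ.
have [a a_q1] := card_gt0P q1_occ; have [b b_q2] := card_gt0P q2_occ.
have [i_range j_range a_sq] := mem_quad_pts a_q1.
have [_ _ b_sq] := mem_quad_pts b_q2.
split=> //; exists a, b; split=> //.
apply: contraNneq q12 => eab; rewrite eab in a_q1.
by rewrite (mem_quad_pts_eq a_q1 b_q2).
Qed.

Lemma cluster_cell_cluster d A : (1 < n)%N -> is_cluster p x0 y0 L d A ->
  exists k i j o, two_point_cell k i j /\ A = cell_cluster k i j o.
Proof.
move=> n_gt1 [[k [i [j [sq ->]]]] | [k [i [j [sq [_ [q1 [q2 [_ _ _ ->]]]]]]]]].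
  by exists k, i, j, None; split => //; apply: compressed_two_point_cell.
by exists k, i, j, (Some (q1, q2)); split => //; apply: compressed_two_point_cell.
Qed.

End Cells.

(* Unlike [ge0_le_integral], this needs no measurability: 1/lfs is never shown
   to be measurable. *)
Lemma ge0_le_integral_nonmeas (d : measure_display) (T : measurableType d)
    (R : realType) (mu : {measure set T -> \bar R}) (D : set T) (f g : T -> \bar R) :
  (forall x, D x -> (0 <= g x)%E) -> (forall x, D x -> (g x <= f x)%E) ->
  (\int[mu]_(x in D) g x <= \int[mu]_(x in D) f x)%E.
Proof.
move=> g0 gf; have f0 x : D x -> (0 <= f x)%E.
  by move=> Dx; apply: le_trans (g0 x Dx) (gf x Dx).
rewrite ge0_integralE // [leRHS]ge0_integralE //.
apply: ge_ereal_sup => _ [h h_le <-]; apply: ereal_sup_ubound; exists h => //= x.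
apply: le_trans (h_le x) _; rewrite /patch; case: ifP => // /set_mem Dx.
exact: gf.
Qed.

Section SquareIntegrals.
Variable R : realType.
Local Open Scope classical_set_scope.
Local Notation mu := (@lebesgue_measure R \x @lebesgue_measure R)%E.

Lemma closed_squareE (a b s : R) :
  closed_square a b s = `[a, a + s] `*` `[b, b + s].
Proof. by apply/seteqP; split => z; rewrite /closed_square /= !in_itv. Qed.

Lemma measurable_closed_square (a b s : R) : measurable (closed_square a b s).
Proof. by rewrite closed_squareE; apply: measurableX; apply: measurable_itv. Qed.

Lemma measure_closed_square (a b s : R) : 0 <= s ->
  mu (closed_square a b s) = (s ^+ 2)%:E.
Proof.
move=> s0; rewrite closed_squareE product_measure1E ?measurable_itv //.
have itvE (c : R) : lebesgue_measure (`[c, c + s] : set R) = s%:E.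
  rewrite lebesgue_measure_itv /= lte_fin ltrDl -EFinD addrAC subrr add0r.
  by case: ltP => // s_le0; have -> : s = 0 by apply/le_anti/andP.
by transitivity (s%:E * s%:E)%E; [congr (_ * _)%E; apply: itvE | rewrite -EFinM expr2].
Qed.

Lemma integral_sum_indic_squares (I : finType) (P : pred I) (a b s c : I -> R)
    (D : set (R * R)) :
  measurable D -> (forall i, 0 <= s i) -> (forall i, 0 <= c i) ->
  (forall i, P i -> closed_square (a i) (b i) (s i) `<=` D) ->
  (\int[mu]_(z in D) (\sum_(i | P i) c i * \1_(closed_square (a i) (b i) (s i)) z)%:E
   = (\sum_(i | P i) c i * s i ^+ 2)%:E)%E.
Proof.
move=> mD s0 c0 sq_D; under eq_integral do rewrite -sumEFin -big_filter.
rewrite ge0_integral_sum // => [|i|i z _]; last 2 first.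
- apply/measurable_realfun.measurable_EFinP/measurable_realfun.measurable_funM.
    exact: measurable_cst.
  by apply: measurable_realfun.measurable_indic; apply: measurable_closed_square.
- by rewrite lee_fin mulr_ge0 ?indicE.
rewrite big_filter -sumEFin; apply: eq_bigr => i Pi.
have Zl := @integralZl_indic _ _ _ mu _ mD (fun=> closed_square (a i) (b i) (s i)) (c i).
rewrite /= in Zl; rewrite Zl; last 2 first.
- by rewrite ltNge c0.
- exact: measurable_closed_square.
rewrite integral_indic //; last exact: measurable_closed_square.
rewrite setIidl; last exact: sq_D.
by rewrite EFinM; congr (_ * _)%E; apply: measure_closed_square.
Qed.

End SquareIntegrals.

Section LevelCounting.
Variable R : archiRealFieldType.

Lemma sum_nat_eq_le1 (M : nat) (u : int) : \sum_(i < M) ((i%:Z == u)%:R : R) <= 1.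
Proof.
have [i0 i0u | no_u] := pickP (fun i : 'I_M => i%:Z == u); last first.
  by rewrite big1 // => i _; rewrite no_u.
rewrite (bigD1 i0) //= i0u big1 ?addr0 // => i /negPf i_i0.
apply/eqP; rewrite pnatr_eq0 eqb0; apply: contraFN i_i0 => /eqP iu.
by move/eqP: i0u; rewrite -iu => -[e]; apply/eqP/val_inj.
Qed.

Lemma sum_strip_indic_le2 (M : nat) (c s t : R) : 0 < s ->
  \sum_(i < M) ((c + i%:R * s <= t <= c + i%:R * s + s)%R%:R : R) <= 2.
Proof.
move=> s_gt0; set f := Num.floor ((t - c) / s).
apply: le_trans (_ : \sum_(i < M) (((i%:Z == f - 1)%:R : R) + (i%:Z == f)%:R) <= 2).
  apply: ler_sum => i _; case: (boolP (_ <= t <= _)) => [/andP[lo hi]|_] /=;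
    last by rewrite addr_ge0.
  have i_le : i%:R <= (t - c) / s :> R by rewrite ler_pdivlMr //; lra.
  have le_i1 : (t - c) / s <= i%:R + 1 :> R by rewrite ler_pdivrMr // mulrDl mul1r; lra.
  have i_f : i%:Z <= f by rewrite floor_ge_int.
  have f_i1 : f <= i%:Z + 1.
    by rewrite -(ler_int R) intrD; apply: le_trans (floor_le _) le_i1.
  have [->|->] : i%:Z = f - 1 \/ i%:Z = f by lia.
    by rewrite eqxx /= lerDl ler0n.
  by rewrite eqxx /= lerDr ler0n.
by rewrite big_split /= -[2]/(1 + 1) lerD ?sum_nat_eq_le1.
Qed.

Lemma sum_pow2_le (K : nat) (B : R) : 0 <= B ->
  \sum_(k < K) (if 2 ^+ k <= B then 2 ^+ k else 0) <= 2 * B.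
Proof.
move=> B0; suff : (\sum_(k < K) (if 2 ^+ k <= B then 2 ^+ k else 0 : R) <= 2 ^+ K) /\
    (\sum_(k < K) (if 2 ^+ k <= B then 2 ^+ k else 0 : R) <= 2 * B) by case.
elim: K => [|K [IH_pow IH_B]]; first by rewrite big_ord0 expr0 mulr_ge0.
have pow_ge0 : 0 <= 2 ^+ K :> R by rewrite exprn_ge0.
by rewrite big_ord_recr /= exprS; case: ifP => [/idP pow_le | _]; split; lra.
Qed.

End LevelCounting.

Lemma dist_le_closed_square (R : realType) (X Y s : R) (z w : R * R) :
  closed_square X Y s z -> closed_square X Y s w -> dist z w <= 2 * s.
Proof.
move=> [/andP[? ?] /andP[? ?]] [/andP[? ?] /andP[? ?]].
apply: le_trans (dist_le_sum_abs z w) _.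
have : `|z.1 - w.1| <= s by rewrite ler_norml; apply/andP; split; lra.
have : `|z.2 - w.2| <= s by rewrite ler_norml; apply/andP; split; lra.
lra.
Qed.

Section CellDensity.
Variables (R : realType) (n : nat) (p : 'I_n -> R * R) (x0 y0 L : R).
Hypothesis L_gt0 : 0 < L.

Definition cell_index K := ('I_K * 'I_(2 ^ K) * 'I_(2 ^ K))%type.

Lemma two_point_cell_pow_le k i j z : 0 < lfs p z ->
  two_point_cell p x0 y0 L k i j -> cell_square x0 y0 L k i j z ->
  2 ^+ k <= 2 * L / lfs p z.
Proof.
move=> lfs_gt0 [_ _ [a [b [ab a_sq b_sq]]]] z_sq.
have lfs_le := lfs_le ab (dist_le_closed_square z_sq a_sq) (dist_le_closed_square z_sq b_sq).
have pow_gt0 : 0 < 2 ^+ k :> R by rewrite exprn_gt0.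
have -> : 2 * L = 2 ^+ k * (2 * cell_side L k).
  by rewrite /cell_side; field; rewrite gt_eqF.
by rewrite ler_pdivlMr // ler_pM2l.
Qed.

Lemma sum_cell_density_le K z : 0 < lfs p z ->
  \sum_(q : cell_index K | `[< two_point_cell p x0 y0 L q.1.1 q.1.2 q.2 >])
    (16 * cell_side L q.1.1)^-1 * \1_(cell_square x0 y0 L q.1.1 q.1.2 q.2) z
  <= (lfs p z)^-1.
Proof.
(* A square of level k containing z and two points of S has 2^k <= B, and z lies in
   at most 2 x 2 squares of each level. *)
move=> lfs_gt0; set B := 2 * L / lfs p z.
pose g k : R := (if 2 ^+ k <= B then 2 ^+ k else 0) / L.
pose strip c t k (i : nat) : R :=
  (c + i%:R * cell_side L k <= t <= c + i%:R * cell_side L k + cell_side L k)%R%:R.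
have g_ge0 k : 0 <= g k.
  by rewrite /g; case: ifP => _; rewrite ?mul0r // divr_ge0 ?exprn_ge0 // ltW.
have term_le (q : cell_index K) :
    (if `[< two_point_cell p x0 y0 L q.1.1 q.1.2 q.2 >] then
       (16 * cell_side L q.1.1)^-1 * \1_(cell_square x0 y0 L q.1.1 q.1.2 q.2) z else 0)
    <= 16^-1 * (g q.1.1 * (strip x0 z.1 q.1.1 q.1.2 * strip y0 z.2 q.1.1 q.2)).
  case: q => [[k i] j] /=; case: ifP => [/asboolP tpc|_]; last first.
    by rewrite mulr_ge0 ?invr_ge0 // mulr_ge0 // mulr_ge0 ?ler0n.
  rewrite indicE; case: (boolP (z \in _)) => [/set_mem z_sq | _]; last first.
    by rewrite mulr0 mulr_ge0 ?invr_ge0 // mulr_ge0 // mulr_ge0 ?ler0n.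
  have pow_le := two_point_cell_pow_le lfs_gt0 tpc z_sq.
  move: z_sq; rewrite /cell_square /closed_square !pmulrn => -[x_in y_in].
  rewrite /strip /g x_in y_in -/B pow_le /= !mulr1 /cell_side invfM invf_div.
  by rewrite mulrA.
have level_le (k : 'I_K) :
    \sum_(i < 2 ^ K) \sum_(j < 2 ^ K) g k * (strip x0 z.1 k i * strip y0 z.2 k j)
    <= 4 * g k.
  under eq_bigr do rewrite -mulr_sumr.
  rewrite -mulr_sumr -big_distrlr /= mulrC ler_wpM2r //.
  have strip_le c t := sum_strip_indic_le2 (2 ^ K) c t (cell_side_gt0 L_gt0 k).
  apply: (@le_trans _ _ (2 * 2)); last by rewrite -natrM.
  by rewrite ler_pM ?sumr_ge0 ?strip_le // => ? _; rewrite ler0n.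
rewrite big_mkcond /=; apply: le_trans (ler_sum _ (fun q _ => term_le q)) _.
rewrite -mulr_sumr.
have -> : \sum_(q : cell_index K)
      g q.1.1 * (strip x0 z.1 q.1.1 q.1.2 * strip y0 z.2 q.1.1 q.2)
    = \sum_(k < K) \sum_(i < 2 ^ K) \sum_(j < 2 ^ K)
        g k * (strip x0 z.1 k i * strip y0 z.2 k j).
  by rewrite !pair_bigA.
apply: le_trans (_ : 16^-1 * \sum_(k < K) 4 * g k <= _).
  by rewrite ler_pM2l ?invr_gt0 //; apply: ler_sum => k _; apply: level_le.
have B_ge0 : 0 <= B by rewrite divr_ge0 ?mulr_ge0 ?ltW.
rewrite -mulr_sumr /g -mulr_suml.
apply: le_trans (_ : 16^-1 * (4 * (2 * B / L)) <= _).
  by rewrite !ler_pM2l ?invr_gt0 // ler_pM2r ?invr_gt0 // sum_pow2_le.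
by rewrite /B le_eqVlt; apply/orP; left; apply/eqP; field; rewrite !gt_eqF.
Qed.

End CellDensity.

Lemma ler_sum_cover (R : numDomainType) (I J : finType) (P : pred I) (V : pred J)
    (phi : J -> I) (g : I -> R) :
  (forall i, 0 <= g i) -> (forall i, P i -> exists2 j, V j & phi j = i) ->
  \sum_(i | P i) g i <= \sum_(j | V j) g (phi j).
Proof.
move=> g_ge0 phi_cover.
rewrite [leRHS](partition_big phi xpredT) //= big_mkcond /=.
apply: ler_sum => i _; case: ifP => Pi; last by rewrite sumr_ge0.
have [j Vj <-] := phi_cover i Pi.
by rewrite (bigD1 j) ?Vj ?eqxx //= lerDl sumr_ge0.
Qed.

Section ClusterBound.
Variables (R : realType) (n : nat) (p : 'I_n -> R * R) (x0 y0 L : R).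
Hypotheses (L_gt0 : 0 < L) (bsq : bounding_square p x0 y0 L).
Local Notation two_point_cell := (two_point_cell p x0 y0 L).
Local Notation cell_cluster := (cell_cluster p x0 y0 L).

Definition cells_side_sum K : R :=
  \sum_(q : cell_index K | `[< two_point_cell q.1.1 q.1.2 q.2 >]) cell_side L q.1.1.

Lemma cell_cluster_perimeter_le k i j o :
  hull_perimeter [seq p a | a in cell_cluster k i j o] <= 4 * cell_side L k.
Proof.
apply: (@hull_perimeter_le _ _ (x0 + i%:~R * cell_side L k) (y0 + j%:~R * cell_side L k)).
  exact/ltW/cell_side_gt0.
move=> _ /mapP[a a_in ->].
by rewrite mem_enum in a_in; case/(mem_cell_cluster L_gt0 bsq): a_in.
Qed.

Lemma clusters_bounded_depth d : (1 < n)%N -> exists K, forall A,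
  is_cluster p x0 y0 L d A ->
  exists k i j o, [/\ (k < K)%N, two_point_cell k i j & A = cell_cluster k i j o].
Proof.
move=> n_gt1.
have : \forall K \near \oo%classic, forall A, is_cluster p x0 y0 L d A ->
    exists k i j o, [/\ (k < K)%N, two_point_cell k i j & A = cell_cluster k i j o].
  apply: filter_forall => A.
  have [cl | not_cl] := pselect (is_cluster p x0 y0 L d A); last first.
    by apply: nearW => K /not_cl.
  case: (cluster_cell_cluster L_gt0 bsq n_gt1 cl) => k [i [j [opt [tpc ->]]]].
  near=> K => _; exists k, i, j, opt; split => //; near: K; exact: nbhs_infty_gt.
by move=> [K _ depth_K]; exists K; apply: depth_K => /=.
Unshelve. all: by end_near.
Qed.

Lemma cell_index_of K k (i j : int) : (k < K)%N ->
  0 <= i < (2 ^ k)%N%:Z -> 0 <= j < (2 ^ k)%N%:Z ->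
  exists q : cell_index K, [/\ q.1.1 = k :> nat, q.1.2 = i :> int & q.2 = j :> int].
Proof.
move=> k_lt; have pow_le : (2 ^ k <= 2 ^ K)%N by rewrite leq_pexp2l // ltnW.
have ord_of (m : int) : 0 <= m < (2 ^ k)%N%:Z -> exists u : 'I_(2 ^ K), u = m :> int.
  case: m => [m|//] /andP[_]; rewrite ltz_nat => m_lt.
  by exists (Ordinal (leq_trans m_lt pow_le)).
move=> /ord_of[u <-] /ord_of[v <-]; by exists (Ordinal k_lt, u, v).
Qed.

Lemma cluster_perimeters_le d K : (forall A, is_cluster p x0 y0 L d A ->
    exists k i j o, [/\ (k < K)%N, two_point_cell k i j & A = cell_cluster k i j o]) ->
  \sum_(A : {set 'I_n} | `[< is_cluster p x0 y0 L d A >])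
    hull_perimeter [seq p a | a in A] <= 68 * cells_side_sum K.
Proof.
move=> depth_K.
pose J := (cell_index K * cluster_shape)%type.
pose phi (x : J) := cell_cluster x.1.1.1 x.1.1.2 x.1.2 x.2.
apply: le_trans (ler_sum_cover (phi := phi)
  (g := fun A => hull_perimeter [seq p a | a in A])
  (V := fun x : J => `[< two_point_cell x.1.1.1 x.1.1.2 x.1.2 >]) _ _) _.
- by move=> A; apply: hull_perimeter_ge0.
- move=> A /asboolP/depth_K[k [i [j [opt [k_lt tpc ->]]]]].
  have [i_range j_range _] := tpc.
  have [q [qk qi qj]] := cell_index_of k_lt i_range j_range.
  by exists (q, opt); rewrite /phi /= qk qi qj //; apply/asboolP.
apply: le_trans (ler_sum _ (fun x _ => cell_cluster_perimeter_le _ _ _ x.2)) _.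
rewrite (_ : \sum_(x : J | _) _ =
    \sum_(q : cell_index K | `[< two_point_cell q.1.1 q.1.2 q.2 >])
      \sum_(o : cluster_shape) 4 * cell_side L q.1.1).
  rewrite /cells_side_sum mulr_sumr; apply: ler_sum => q _.
  by rewrite sumr_const card_option !card_prod !card_bool -mulrnAl -mulrnA.
by rewrite pair_big /=; apply: eq_bigl => x; rewrite andbT.
Qed.

Lemma two_point_cell_sub k i j : two_point_cell k i j ->
  (cell_square x0 y0 L k i j `<=` closed_square x0 y0 L)%classic.
Proof.
case=> /andP[i0 iN] /andP[j0 jN] _ z [/andP[? ?] /andP[? ?]].
have s_gt0 := cell_side_gt0 L_gt0 k.
have L_eq : ((2 ^ k)%N%:Z)%:~R * cell_side L k = L.
  by rewrite /cell_side [_%:~R]natrX; field; rewrite expf_neq0.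
have cast_le (m : int) : m < (2 ^ k)%N%:Z -> m%:~R + 1 <= ((2 ^ k)%N%:Z)%:~R :> R.
  by move=> m_lt; rewrite -[1 in leLHS]mulr1z -intrD ler_int; lia.
have := cast_le _ iN; have := cast_le _ jN.
have : 0 <= i%:~R :> R by rewrite ler0z.
have : 0 <= j%:~R :> R by rewrite ler0z.
by split; apply/andP; split; nra.
Qed.

Lemma cells_side_sum_le_integral K : (forall z, 0 < lfs p z) ->
  ((cells_side_sum K)%:E <= 16%:E *
    \int[(@lebesgue_measure R \x @lebesgue_measure R)%E]_(z in closed_square x0 y0 L)
      ((lfs p z)^-1)%:E)%E.
Proof.
move=> lfs_gt0; set tpc := fun q : cell_index K => `[< two_point_cell q.1.1 q.1.2 q.2 >].
have density_ge0 (q : cell_index K) : 0 <= (16 * cell_side L q.1.1)^-1.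
  by rewrite invr_ge0 mulr_ge0 // ltW // cell_side_gt0.
have := integral_sum_indic_squares (P := tpc)
  (a := fun q => x0 + q.1.2%:~R * cell_side L q.1.1)
  (b := fun q => y0 + q.2%:~R * cell_side L q.1.1)
  (s := fun q => cell_side L q.1.1) (c := fun q => (16 * cell_side L q.1.1)^-1)
  (measurable_closed_square x0 y0 L) (fun q => ltW (cell_side_gt0 L_gt0 _)) density_ge0
  (fun q tq => two_point_cell_sub (asboolW tq)).
rewrite /= => density_integral.
have -> : cells_side_sum K =
    16 * \sum_(q | tpc q) (16 * cell_side L q.1.1)^-1 * cell_side L q.1.1 ^+ 2.
  rewrite mulr_sumr; apply: eq_bigr => q _.
  by field; rewrite gt_eqF ?cell_side_gt0.
rewrite EFinM -density_integral lee_wpmul2l ?lee_fin //.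
apply: ge0_le_integral_nonmeas => z _; rewrite lee_fin.
  by rewrite sumr_ge0 // => q _; rewrite mulr_ge0 ?density_ge0.
exact: sum_cell_density_le.
Qed.

End ClusterBound.

Unset Implicit Arguments.

Theorem lemma9 (R : realType) :
  exists c : R, forall (n : nat) (p : 'I_n -> R * R),
    (2 <= n)%N -> injective p ->
    forall x0 y0 L : R, min_bounding_square p x0 y0 L ->
    forall d : nat -> int -> int -> bool,
    ((\sum_(A : {set 'I_n} | `[< is_cluster p x0 y0 L d A >])
        hull_perimeter [seq p a | a in A])%:E
     <= c%:E * \int[(@lebesgue_measure R \x @lebesgue_measure R)%E]_(z in closed_square x0 y0 L)
               ((lfs p z)^-1)%:E)%E.
Proof.
exists 1088 => n p n_gt1 p_inj x0 y0 L [bsq _] d.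
have L_gt0 := bounding_side_gt0 n_gt1 p_inj bsq.
have [K depth_K] := clusters_bounded_depth L_gt0 bsq d n_gt1.
apply: (@le_trans _ _ (68 * cells_side_sum p x0 y0 L K)%:E).
  by rewrite lee_fin; apply: cluster_perimeters_le.
have -> : 1088 = 68 * 16 :> R by rewrite -natrM.
rewrite !EFinM -muleA lee_wpmul2l ?lee_fin //.
by apply: cells_side_sum_le_integral => // z; apply: lfs_gt0.
Qed.
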